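(* Let $p$ be a prime, $n\ge1$, and let $1\to T^n\to G\xrightarrow{\pi} C_p\to 1$ be an extension of compact Lie groups. Then there exist a closed normal subgroup $N$ of $G$ and an integer $l$ with $1\le l\le n$ such that $G/N$ is a split extension of an $l$-torus by $C_p$, i.e. there is a split short exact sequence $1\to T^l\to G/N\to C_p\to 1$. *)

From HB Require Import structures.
From mathcomp Require Import all_boot all_order all_algebra.
From mathcomp Require Import all_classical all_reals all_analysis.
Import numFieldTopology.Exports.
Set Implicit Arguments. Unset Strict Implicit. Unset Printing Implicit Defensive.
Import Order.TTheory GRing.Theory Num.Theory.
Local Open Scope classical_set_scope.
Local Open Scope ring_scope.

Record topGroup := TopGroup {
  tg_car :> topologicalType;
  tg_mul : tg_car -> tg_car -> tg_car;
  tg_inv : tg_car -> tg_car;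
  tg_one : tg_car;
  tg_mulA : forall x y z, tg_mul x (tg_mul y z) = tg_mul (tg_mul x y) z;
  tg_mul1g : forall x, tg_mul tg_one x = x;
  tg_mulg1 : forall x, tg_mul x tg_one = x;
  tg_mulVg : forall x, tg_mul (tg_inv x) x = tg_one;
  tg_mulgV : forall x, tg_mul x (tg_inv x) = tg_one;
  tg_mul_cont : continuous (fun xy : tg_car * tg_car => tg_mul xy.1 xy.2);
  tg_inv_cont : continuous tg_inv
}.

Definition tg_hom (G H : topGroup) (f : G -> H) :=
  forall x y, f (tg_mul x y) = tg_mul (f x) (f y).

Definition closed_normal_subgroup (G : topGroup) (N : set G) :=
  [/\ closed N, N (tg_one G),
      (forall x y, N x -> N y -> N (tg_mul x y)),
      (forall x, N x -> N (tg_inv x)) &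
      (forall g x, N x -> N (tg_mul (tg_mul g x) (tg_inv g)))].

(* An embedding of the l-torus T^l = R^l / Z^l into H: a continuous group
   homomorphism e : (R^l, +) -> H whose kernel is exactly Z^l.  It induces a
   continuous injective homomorphism R^l/Z^l -> H, which (T^l being compact and
   H Hausdorff) is an isomorphism of topological groups onto its image. *)
Definition torus_embedding (R : realType) (l : nat) (H : topGroup)
    (e : 'rV[R]_l -> H) :=
  [/\ continuous e,
      (forall x y, e (x + y) = tg_mul (e x) (e y)) &
      (forall x, e x = tg_one H <-> forall i, x ord0 i \is a Num.int)].

(* A continuous surjective homomorphism q : H -> C_p (C_p = 'Z_p, additive,
   discrete) whose kernel is exactly the image of the torus embedding e:
   i.e. a short exact sequence 1 -> T^l --e--> H --q--> C_p -> 1. *)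
Definition torus_ext (R : realType) (p l : nat) (H : topGroup)
    (e : 'rV[R]_l -> H) (q : H -> 'Z_p) :=
  [/\ torus_embedding e,
      (forall x y, q (tg_mul x y) = q x + q y),
      (forall k, exists h, q h = k),
      (forall k, open (q @^-1` [set k])) &
      (forall h, q h = 0 <-> exists x, e x = h)].

From HB Require Import structures.
From mathcomp Require Import all_boot all_order all_algebra.
From mathcomp Require Import all_classical all_reals all_analysis.
Import numFieldTopology.Exports.
Import Order.TTheory GRing.Theory Num.Theory.
Local Open Scope classical_set_scope.
Local Open Scope ring_scope.

(* Let T = ker pi, the image of the torus e, pick g with pi g = 1 and put
   t0 = g ^+ p, an element of T.  Every h in G is uniquely t * g ^+ a with
   t in T and a < p, and t0 is central since T is abelian.
   1. Twisting (section Twist).  For a central z with pi z = 0 the product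
        x * y * z ^+ carry(pi x, pi y),    carry(a, b) = (a + b) div p,
      is again a topological group law on the space of G: the carry is a
      2-cocycle, and pi is locally constant.  Torus and projection are
      unchanged.  For z = t0^-1 the powers g ^+ a (a < p) form a subgroup
      isomorphic to C_p, so the twisted group splitG is a split extension.
   2. The map pmap (t * g ^+ a) = t ^+ p * t0 ^+ a * g ^+ a is a continuous
      homomorphism from G onto splitG (onto because T is divisible).  Its
      kernel N, the p-torsion of T, is a closed normal subgroup, and G / N is
      the split extension splitG of T^n by C_p; hence l = n works. *)

(* The carrier of a topological group, equipped with its mathcomp group
   structure so that the group-theoretic library applies. *)
Definition GT (G : topGroup) : Type := tg_car G.
HB.instance Definition _ (G : topGroup) := Choice.on (GT G).
HB.instance Definition _ (G : topGroup) :=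
  isGroup.Build (GT G) (@tg_mulA G) (@tg_mul1g G) (@tg_mulg1 G)
    (@tg_mulVg G) (@tg_mulgV G).

(* Continuity is local: f is continuous if near each point it agrees with a
   function continuous at that point.  Used for maps depending on pi, which
   is locally constant. *)
Lemma continuous_from_local (T U : topologicalType) (f : T -> U) :
  (forall x, exists g : T -> U,
     (\forall y \near x, g y = f y) /\ {for x, continuous g}) ->
  continuous f.
Proof.
move=> loc x; have [g [near_gf gc]] := loc x.
have gfx : g x = f x by exact: nbhs_singleton near_gf.
by apply: cvg_trans (near_eq_cvg near_gf) _; rewrite -gfx.
Qed.

Lemma near_fst (T U : topologicalType) (x : T) (y : U) (A : set T) :
  nbhs x A -> \forall uv \near (x, y), A uv.1.
Proof. exact: (@cvg_fst _ _ (nbhs x) (nbhs y)). Qed.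

Lemma near_snd (T U : topologicalType) (x : T) (y : U) (A : set U) :
  nbhs y A -> \forall uv \near (x, y), A uv.2.
Proof. exact: (@cvg_snd _ _ (nbhs x) (nbhs y)). Qed.

Section TopGroupContinuity.
Variable G : topGroup.
Local Open Scope group_scope.

Lemma mul_continuous (T : topologicalType) (f h : T -> GT G) (x : T) :
  {for x, continuous f} -> {for x, continuous h} ->
  {for x, continuous (fun w => f w * h w)}.
Proof.
move=> fc hc.
apply: (@continuous_comp _ _ _ (fun w => (f w, h w))
          (fun xy : tg_car G * tg_car G => tg_mul xy.1 xy.2)).
  exact: cvg_pair.
exact: tg_mul_cont.
Qed.

Lemma exp_continuous (T : topologicalType) (f : T -> GT G) (x : T) m :
  {for x, continuous f} -> {for x, continuous (fun w => f w ^+ m)}.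
Proof.
move=> fc; elim: m => [|m IHm]; first exact: cvg_cst.
have -> : (fun w => f w ^+ m.+1) = (fun w => f w * f w ^+ m).
  by apply/funext => w; rewrite expgS.
exact: mul_continuous.
Qed.

End TopGroupContinuity.

(* Carry arithmetic: (a + b) div d is a 2-cocycle, both sides being
   (a + b + c) div d. *)
Lemma divn_add_mod (d u v : nat) :
  (0 < d)%N -> ((u + v %% d) %/ d + v %/ d = (u + v) %/ d)%N.
Proof.
by move=> d_gt0; rewrite -divnDMl // -addnA [(_ %% d + _)%N]addnC -divn_eq.
Qed.

Lemma carry_cocycle (d a b c : nat) : (0 < d)%N ->
  ((a + b) %/ d + ((a + b) %% d + c) %/ d =
   (b + c) %/ d + (a + (b + c) %% d) %/ d)%N.
Proof.
move=> d_gt0; rewrite addnC [(_ %% d + c)%N]addnC divn_add_mod //.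
by rewrite [RHS]addnC divn_add_mod // [(c + _)%N]addnC addnA.
Qed.

Section Homomorphisms.
Variables (G H : topGroup) (f : G -> H).
Hypothesis fhom : tg_hom f.
Local Open Scope group_scope.

Let homM (x y : GT G) : f (x * y) = (f x : GT H) * f y.
Proof. exact: fhom. Qed.

Lemma hom1 : f (tg_one G) = tg_one H.
Proof. by apply: (@mulgI (GT H) (f (tg_one G))); rewrite -homM !mulg1. Qed.

Lemma homV (x : GT G) : f x^-1 = (f x : GT H)^-1.
Proof. by apply: (@mulgI (GT H) (f x)); rewrite -homM !mulgV hom1. Qed.

Lemma kernel_closed_normal : hausdorff_space H -> continuous f ->
  closed_normal_subgroup (fun x => f x = tg_one H).
Proof.
move=> Hhaus fc; split.
- have -> : (fun x => f x = tg_one H) = f @^-1` [set tg_one H] by [].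
  apply: (proj1 (continuous_closedP f) fc).
  exact/accessible_closed_set1/hausdorff_accessible.
- exact: hom1.
- by move=> x y fx fy; rewrite (homM x y) fx fy mulg1.
- by move=> x fx; rewrite (homV x) fx invg1.
- by move=> y x fx; rewrite (homM ((y : GT G) * x)) (homM y x) fx mulg1 homV mulgV.
Qed.

End Homomorphisms.

Section GradedGroup.
Variables (G : topGroup) (p : nat) (pi : G -> 'Z_p).
Hypotheses (p_gt1 : (1 < p)%N)
  (pihom : forall x y, pi (tg_mul x y) = pi x + pi y)
  (piopen : forall k, open (pi @^-1` [set k])).
Local Notation X := (GT G).
Local Open Scope group_scope.

Let p_gt0 : (0 < p)%N. Proof. exact: ltnW. Qed.

Definition zrep (k : 'Z_p) : nat := nat_of_ord k.

Lemma zrep_lt k : (zrep k < p)%N.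
Proof. by rewrite -[X in (_ < X)%N](Zp_cast p_gt1) ltn_ord. Qed.

Lemma zrepK k : (zrep k)%:R = k :> 'Z_p.
Proof. exact: natr_Zp. Qed.

Lemma zrep_nat m : zrep m%:R = (m %% p)%N.
Proof. exact: val_Zp_nat. Qed.

Lemma zrepD a b : zrep (a + b)%R = ((zrep a + zrep b) %% p)%N.
Proof. by rewrite -zrep_nat natrD !zrepK. Qed.

Lemma piM (x y : X) : pi (x * y) = (pi x + pi y)%R.
Proof. exact: pihom. Qed.

Lemma pi1 : pi (1 : X) = 0%R.
Proof. by apply: (@addrI _ (pi (1 : X))); rewrite -piM mulg1 addr0. Qed.

Lemma piV (x : X) : pi x^-1 = (- pi x)%R.
Proof. by apply/eqP; rewrite -subr_eq0 opprK addrC -piM mulgV pi1. Qed.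

Lemma piX (x : X) m : pi (x ^+ m) = (pi x *+ m)%R.
Proof. by elim: m => [|m IHm]; rewrite ?pi1 // expgS piM IHm mulrS. Qed.

Lemma near_pi (x : X) : nbhs x (pi @^-1` [set pi x]).
Proof. exact: open_nbhs_nbhs. Qed.

Definition carry (a b : 'Z_p) : nat := ((zrep a + zrep b) %/ p)%N.

Lemma carry_cocycleZp a b c :
  (carry a b + carry (a + b)%R c = carry b c + carry a (b + c)%R)%N.
Proof. by rewrite /carry !zrepD carry_cocycle. Qed.

Lemma carry0l b : carry 0 b = 0%N.
Proof. by rewrite /carry add0n divn_small // zrep_lt. Qed.

Lemma carry0r b : carry b 0 = 0%N.
Proof. by rewrite /carry addn0 divn_small // zrep_lt. Qed.

Lemma carryC a b : carry a b = carry b a.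
Proof. by rewrite /carry addnC. Qed.

Section Twist.
Variable z : X.
Hypotheses (z_central : forall h, commute z h) (pi_z : pi z = 0%R).

Let zX_central m h : commute (z ^+ m) h.
Proof. exact/commute_sym/commuteX/commute_sym. Qed.

Let pi_zX m : pi (z ^+ m) = 0%R.
Proof. by rewrite piX pi_z mul0rn. Qed.

Definition twmul (x y : X) : X := x * y * z ^+ carry (pi x) (pi y).
Definition twinv (x : X) : X := x^-1 * (z ^+ carry (pi x) (- pi x)%R)^-1.

Lemma pi_twmul x y : pi (twmul x y) = (pi x + pi y)%R.
Proof. by rewrite /twmul !piM pi_zX addr0. Qed.

Lemma pi_twinv x : pi (twinv x) = (- pi x)%R.
Proof. by rewrite /twinv piM !piV pi_zX oppr0 addr0. Qed.

Lemma twmulA x y w : twmul x (twmul y w) = twmul (twmul x y) w.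
Proof.
rewrite /twmul !pi_twmul -(mulgA (x * y)) (zX_central _ w) !mulgA.
by rewrite -!mulgA -!expgnDr carry_cocycleZp addnC !mulgA.
Qed.

Lemma twmul1g x : twmul 1 x = x.
Proof. by rewrite /twmul pi1 carry0l mul1g mulg1. Qed.

Lemma twmulg1 x : twmul x 1 = x.
Proof. by rewrite /twmul pi1 carry0r !mulg1. Qed.

Lemma twmulVg x : twmul (twinv x) x = 1.
Proof.
rewrite /twmul pi_twinv carryC /twinv -(mulgA _ _ x).
have /commute_sym/commuteV/commute_sym -> := zX_central
  (carry (pi x) (- pi x)%R) x.
by rewrite mulgA mulVg mul1g mulVg.
Qed.

Lemma twmulgV x : twmul x (twinv x) = 1.
Proof. by rewrite /twmul pi_twinv /twinv !mulgA mulgV mul1g mulVg. Qed.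

(* Near (x, y) the twisted product is x' * y' times a constant. *)
Lemma twmul_cont :
  continuous (fun xy : tg_car G * tg_car G => twmul xy.1 xy.2).
Proof.
apply: continuous_from_local => -[x y].
exists (fun uv : tg_car G * tg_car G =>
          (uv.1 : X) * uv.2 * z ^+ carry (pi x) (pi y)); split.
  near=> uv; rewrite /twmul.
  have -> : pi uv.1 = pi x by near: uv; exact: near_fst (near_pi x).
  have -> : pi uv.2 = pi y by near: uv; exact: near_snd (near_pi y).
  by [].
apply: (@mul_continuous _ _ (fun uv => (uv.1 : X) * uv.2)); last exact: cvg_cst.
by apply: mul_continuous; [exact: cvg_fst | exact: cvg_snd].
Unshelve. all: by end_near.
Qed.

Lemma twinv_cont : continuous twinv.
Proof.
apply: continuous_from_local => x.
exists (fun u : X => u^-1 * (z ^+ carry (pi x) (- pi x)%R)^-1); split.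
  by apply: filterS (near_pi x) => u /= pi_u; rewrite /twinv pi_u.
apply: (@mul_continuous _ _ (fun u : X => u^-1)); last exact: cvg_cst.
exact: tg_inv_cont.
Qed.

Definition twisted : topGroup :=
  @TopGroup (tg_car G) twmul twinv (tg_one G) twmulA twmul1g twmulg1
    twmulVg twmulgV twmul_cont twinv_cont.

Lemma twmul_deg0 (x y : X) : pi x = 0%R -> pi y = 0%R -> twmul x y = x * y.
Proof. by rewrite /twmul => -> ->; rewrite carry0l mulg1. Qed.

Lemma twisted_torus_ext (R : realType) (n : nat) (e : 'rV[R]_n -> G) :
  torus_ext e pi -> torus_ext (H := twisted) e pi.
Proof.
case=> -[ec eM eker] _ pisurj _ piker; split=> //; last exact: pi_twmul.
split=> // x y /=; rewrite twmul_deg0; first exact: eM.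
  by apply/piker; exists x.
by apply/piker; exists y.
Qed.

End Twist.

Section SplitQuotient.
Variables (R : realType) (n : nat) (e : 'rV[R]_n -> G) (g : X).
Hypotheses (ext : torus_ext e pi) (pi_g : pi g = 1%R).

Let eD x y : e (x + y) = (e x : X) * e y.
Proof. by case: ext => -[]. Qed.

Let piker h : pi h = 0%R <-> exists x, e x = h.
Proof. by case: ext. Qed.

(* The torus T = ker pi = e @` setT. *)
Definition inT (x : X) : Prop := pi x = 0%R.

Lemma inTM x y : inT x -> inT y -> inT (x * y).
Proof. by rewrite /inT piM => -> ->; rewrite addr0. Qed.

Lemma inTV x : inT x -> inT x^-1.
Proof. by rewrite /inT piV => ->; rewrite oppr0. Qed.

Lemma inTX x m : inT x -> inT (x ^+ m).
Proof. by rewrite /inT piX => ->; rewrite mul0rn. Qed.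

Lemma inTJ x y : inT x -> inT (x ^ y).
Proof. by rewrite /inT /conjg !piM piV => ->; rewrite add0r addNr. Qed.

Lemma eMn u m : e (u *+ m) = (e u : X) ^+ m.
Proof.
elim: m => [|m IHm]; last by rewrite mulrS eD IHm expgS.
by apply: (@mulgI X (e 0)); rewrite -eD addr0 mulg1.
Qed.

(* T is abelian, being the image of (R^n, +). *)
Lemma inT_commute x y : inT x -> inT y -> commute x y.
Proof. by move=> /piker[u <-] /piker[v <-]; rewrite /commute -!eD addrC. Qed.

Lemma inT_root t : inT t -> exists2 s, inT s & s ^+ p = t.
Proof.
move=> /piker[u <-]; exists (e ((p%:R)^-1 *: u)); first by apply/piker; eexists.
rewrite -eMn scalerMnl -mulr_natr mulVf ?scale1r //.
by rewrite pnatr_eq0 -lt0n ltnW.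
Qed.

Lemma pi_gX m : pi (g ^+ m) = m%:R.
Proof. by rewrite piX pi_g. Qed.

Definition nf (t : X) (a : nat) : X := t * g ^+ a.
Definition dpart (h : X) : nat := zrep (pi h).
Definition tpart (h : X) : X := h * (g ^+ dpart h)^-1.

Lemma dpart_lt h : (dpart h < p)%N.
Proof. exact: zrep_lt. Qed.

Lemma inT_tpart h : inT (tpart h).
Proof. by rewrite /inT /tpart piM piV pi_gX zrepK subrr. Qed.

Lemma nf_parts h : nf (tpart h) (dpart h) = h.
Proof. exact: mulgVK. Qed.

Lemma pi_nf t a : inT t -> pi (nf t a) = a%:R.
Proof. by rewrite /nf piM pi_gX => ->; rewrite add0r. Qed.

Lemma dpart_nf t a : inT t -> (a < p)%N -> dpart (nf t a) = a.
Proof. by move=> Tt ap; rewrite /dpart pi_nf // zrep_nat modn_small. Qed.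

Lemma tpart_nf t a : inT t -> (a < p)%N -> tpart (nf t a) = t.
Proof. by move=> Tt ap; rewrite /tpart dpart_nf // mulgK. Qed.

Definition t0 : X := g ^+ p.

Lemma inT_t0 : inT t0.
Proof. by rewrite /inT pi_gX pchar_Zp. Qed.

Lemma t0X_central m h : commute (t0 ^+ m) h.
Proof.
apply/commute_sym/commuteX/commute_sym.
rewrite -(nf_parts h); apply: commuteM.
  exact: inT_commute inT_t0 (inT_tpart h).
exact: commuteX2.
Qed.

Lemma t0V_central h : commute t0^-1 h.
Proof. exact/commute_sym/commuteV/commute_sym/(t0X_central 1). Qed.

Lemma pi_t0V : pi t0^-1 = 0%R.
Proof. exact: inTV inT_t0. Qed.

(* The twisted group, in which g generates a complement of order p. *)
Local Notation tw := (twmul t0^-1).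

Lemma nf_mul t1 t2 a b :
  nf t1 a * nf t2 b =
  nf (t1 * t2 ^ (g ^+ a)^-1 * t0 ^+ ((a + b) %/ p)) ((a + b) %% p).
Proof.
rewrite /nf /conjg invgK -!mulgA; congr (t1 * (_ * (t2 * _))).
by rewrite -expgnA -expgnDr [(p * _)%N]mulnC -divn_eq expgnDr mulKg.
Qed.

Lemma tw_nf t1 t2 a b : inT t1 -> inT t2 -> (a < p)%N -> (b < p)%N ->
  tw (nf t1 a) (nf t2 b) = nf (t1 * t2 ^ (g ^+ a)^-1) ((a + b) %% p).
Proof.
move=> T1 T2 ap bp; rewrite /twmul.
have -> : carry (pi (nf t1 a)) (pi (nf t2 b)) = ((a + b) %/ p)%N.
  by rewrite /carry !pi_nf // !zrep_nat !modn_small.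
rewrite nf_mul /nf expVgn; set q := ((a + b) %/ p)%N.
by rewrite -(mulgA _ (t0 ^+ q)) (t0X_central q) mulgA mulgK.
Qed.

(* The quotient map: t * g ^+ a |-> t ^+ p * t0 ^+ a * g ^+ a.  On T it is the
   p-th power map, whose kernel is the p-torsion of T. *)
Definition pmap (h : X) : X := tpart h ^+ p * g ^+ (p.+1 * dpart h).

Lemma pmap_nf t a : inT t -> (a < p)%N ->
  pmap (nf t a) = nf (t ^+ p * t0 ^+ a) a.
Proof.
move=> Tt ap; rewrite /pmap tpart_nf // dpart_nf // /nf.
by rewrite mulSnr expgnDr expgnA -!mulgA.
Qed.

(* pmap is a homomorphism into the twisted group; the identity behind it is
   an identity in the abelian group T, checked in coordinates of R^n. *)
Lemma pmapM x y : pmap (x * y) = tw (pmap x) (pmap y).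
Proof.
move: (inT_tpart x) (dpart_lt x) (nf_parts x).
move: (tpart x) (dpart x) => t1 a T1 ap <-.
move: (inT_tpart y) (dpart_lt y) (nf_parts y).
move: (tpart y) (dpart y) => t2 b T2 bp <-.
have Tt0 := inT_t0; set s := t2 ^ (g ^+ a)^-1; have Ts : inT s by exact: inTJ.
have rp : ((a + b) %% p < p)%N by rewrite ltn_pmod // ltnW.
set q := ((a + b) %/ p)%N.
have Tpow t m : inT t -> inT (t ^+ p * t0 ^+ m) by move=> Tt; apply: inTM; apply: inTX.
have Tprod : inT (t1 * s * t0 ^+ q) by apply: inTM; [apply: inTM | apply: inTX].
rewrite nf_mul !pmap_nf // (tw_nf _ _ _ _ (Tpow _ a T1) (Tpow _ b T2) ap bp).
congr nf; rewrite conjMg conjXg -/s.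
have -> : (t0 ^+ b) ^ (g ^+ a)^-1 = t0 ^+ b by rewrite /conjg t0X_central mulKg.
have [u <-] := proj1 (piker _) T1; have [v <-] := proj1 (piker _) Ts.
have [w <-] := proj1 (piker _) Tt0.
rewrite -!eMn -!eD -!eMn -!eD; congr e.
have divE : (q * p + (a + b) %% p = a + b)%N by rewrite -divn_eq.
by rewrite !mulrnDl -mulrnA -addrA -mulrnDr divE mulrnDr addrACA.
Qed.

(* pmap is continuous: near x, dpart is constant. *)
Lemma pmap_cont : continuous (pmap : tg_car G -> tg_car G).
Proof.
apply: continuous_from_local => x.
exists (fun u : X => (u * (g ^+ dpart x)^-1) ^+ p * g ^+ (p.+1 * dpart x)).
split; first by apply: filterS (near_pi x) => u /= pi_u; rewrite /pmap /tpart /dpart pi_u.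
apply: (@mul_continuous _ _ (fun u : X => (u * (g ^+ dpart x)^-1) ^+ p));
  last exact: cvg_cst.
apply: exp_continuous; apply: (@mul_continuous _ _ id); [exact: cvg_id | exact: cvg_cst].
Qed.

(* pmap is onto since T is divisible. *)
Lemma pmap_surj y : exists x, pmap x = y.
Proof.
rewrite -(nf_parts y); have Ty := inT_tpart y; have ay := dpart_lt y.
move: (tpart y) (dpart y) Ty ay => t a Tt ap.
have : inT (t * (t0 ^+ a)^-1) by apply: inTM => //; apply/inTV/inTX/inT_t0.
case/inT_root => s Ts sp.
by exists (nf s a); rewrite pmap_nf // sp mulgVK.
Qed.

Definition sec (k : 'Z_p) : X := g ^+ zrep k.

Lemma pi_sec k : pi (sec k) = k.
Proof. by rewrite pi_gX zrepK. Qed.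

Lemma secD k l : sec (k + l)%R = tw (sec k) (sec l).
Proof.
have T1 : inT 1 by exact: pi1.
have nf1 m : g ^+ m = nf 1 m by rewrite /nf mul1g.
by rewrite /sec zrepD !nf1 tw_nf ?zrep_lt // /conjg !mul1g invgK mulgV.
Qed.

Definition splitG : topGroup := twisted t0^-1 t0V_central pi_t0V.

Lemma quotient_splits : (1 <= n)%N -> hausdorff_space G ->
  exists (N : set G) (l : nat),
    [/\ closed_normal_subgroup N, (1 <= l)%N, (l <= n)%N &
      exists (H : topGroup) (phi : G -> H),
        [/\ hausdorff_space H /\ continuous phi, tg_hom phi,
            (forall h, exists g, phi g = h),
            (forall g, phi g = tg_one H <-> N g) &
            exists (e' : 'rV[R]_l -> H) (q : H -> 'Z_p) (s : 'Z_p -> H),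
              [/\ torus_ext e' q,
                  (forall a b, s (a + b)%R = tg_mul (s a) (s b)) &
                  (forall k, q (s k) = k)]]].
Proof.
move=> n_gt0 Ghaus; have pmap_hom : tg_hom (H := splitG) pmap := pmapM.
exists (fun x => pmap x = tg_one splitG), n; split => //.
  exact: kernel_closed_normal pmap_hom Ghaus pmap_cont.
exists splitG, pmap; split => //; first (split=> //; exact: pmap_cont).
  by move=> h; have := pmap_surj h.
exists e, pi, sec; split; [exact: twisted_torus_ext | exact: secD | exact: pi_sec].
Qed.

End SplitQuotient.

End GradedGroup.

Theorem lemma2p4 (R : realType) (p n : nat) (G : topGroup)
    (e : 'rV[R]_n -> G) (pi : G -> 'Z_p) :
  prime p -> (1 <= n)%N ->
  hausdorff_space G -> compact [set: G] ->
  torus_ext e pi ->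
  exists (N : set G) (l : nat),
    [/\ closed_normal_subgroup N, (1 <= l)%N, (l <= n)%N &
      exists (H : topGroup) (phi : G -> H),
        [/\ hausdorff_space H /\ continuous phi, tg_hom phi,
            (forall h, exists g, phi g = h),
            (forall g, phi g = tg_one H <-> N g) &
            exists (e' : 'rV[R]_l -> H) (q : H -> 'Z_p) (s : 'Z_p -> H),
              [/\ torus_ext e' q,
                  (forall a b, s (a + b) = tg_mul (s a) (s b)) &
                  (forall k, q (s k) = k)]]].
Proof.
move=> /prime_gt1 p_gt1 n_gt0 Ghaus _ ext.
have [_ pihom pisurj piopen _] := ext.
have [g pi_g] := pisurj 1%R.
exact: (@quotient_splits _ _ _ p_gt1 pihom piopen _ _ _ _ ext pi_g n_gt0 Ghaus).
Qed.
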